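(* Let $(G_k)_{k\in\mathbb Z}$ be a gibonacci sequence, let $\lambda = G_1^2 - G_0G_2$, and let $F_k$ denote the Fibonacci numbers. For every positive integer $n$ and all integers $t$ and $m$, \begin{equation*} \begin{split} &5\sum_{j = 1}^n (-F_{m - 3})^{n - j} (F_{m + 2})^j G_{j + t - 1} G_{j + t} G_{j + t + 1} G_{j + t + 2} G_{j + t + m}\\ &\qquad = F_{m + 2}^{n + 1} G_{n + t + 1}^5 - (-F_{m - 3})^n F_{m + 2} G_{t + 1}^5 - \lambda^2\left(F_{m + 2}^{n + 1} G_{n + t + 1} - (-F_{m - 3})^n F_{m + 2} G_{t + 1}\right). \end{split} \end{equation*}
   Context: A gibonacci sequence $(G_k)_{k\in\mathbb Z}$ is defined by arbitrary initial values $G_0=a$, $G_1=b$ (numbers, not both zero) and $G_k=G_{k-1}+G_{k-2}$ for all integers $k$. The Fibonacci numbers $F_k$ are the gibonacci sequence with $F_0=0$, $F_1=1$, extended to all integer indices by the same recurrence. The convention $0^0=1$ is used for powers. *)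

From mathcomp Require Import all_boot all_order all_algebra.
Set Implicit Arguments. Unset Strict Implicit. Unset Printing Implicit Defensive.
Import Order.TTheory GRing.Theory Num.Theory.
Local Open Scope ring_scope.

Fixpoint gib_fwd {R : nzRingType} (a b : R) (n : nat) : R * R :=
  match n with
  | 0%N => (a, b)
  | n'.+1 => let p := gib_fwd a b n' in (p.2, p.1 + p.2)
  end.

(* backward: (G_{-n}, G_{-n+1}) for n : nat *)
Fixpoint gib_bwd {R : nzRingType} (a b : R) (n : nat) : R * R :=
  match n with
  | 0%N => (a, b)
  | n'.+1 => let p := gib_bwd a b n' in (p.2 - p.1, p.1)
  end.

Definition gib {R : nzRingType} (a b : R) (k : int) : R :=
  match k with
  | Posz n => (gib_fwd a b n).1
  | Negz n => (gib_bwd a b n.+1).1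
  end.

Definition fib {R : nzRingType} (k : int) : R := gib 0 1 k.

From mathcomp Require Import all_boot all_order all_algebra.
From mathcomp Require Import zify ring.
Import Order.TTheory GRing.Theory Num.Theory.
Local Open Scope ring_scope.

(* Every gibonacci term is a combination [G_(k+m) = F_m G_(k+1) + F_(m-1) G_k],
   and [G_(k+1)^2 - G_k G_(k+2)] only changes sign with k, so its square is lambda^2.
   Writing everything in terms of [x = G_k], [y = G_(k+1)] and [F_m], [F_(m-1)] gives the
   polynomial identity
     [5 G_(k-1) G_k G_(k+1) G_(k+2) G_(k+m) = F_(m+2) f(k+1) + F_(m-3) f(k)]
   with [f(k) = G_k^5 - lambda^2 G_k], which turns the weighted sum into a telescoping one. *)

Lemma int_shift_ind (P : int -> Prop) :
  P 0 -> (forall k, P k <-> P (k + 1)) -> forall k, P k.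
Proof.
move=> P0 PS; elim/int_ind => [//|n|n].
- by rewrite (_ : n.+1%:Z = n%:Z + 1) -?PS //; lia.
- by move=> Pn; apply/PS; rewrite (_ : - n.+1%:Z + 1 = - n%:Z) //; lia.
Qed.

Definition fib_recurrence {V : zmodType} (u : int -> V) : Prop :=
  forall k, u (k + 2) = u (k + 1) + u k.

Lemma fib_recurrence_eq (V : zmodType) (u v : int -> V) :
  fib_recurrence u -> fib_recurrence v -> u 0 = v 0 -> u 1 = v 1 -> u =1 v.
Proof.
move=> ru rv u0 u1.
suff uv k : u k = v k /\ u (k + 1) = v (k + 1) by move=> k; case: (uv k).
elim/int_shift_ind: k => [//|k].
rewrite -addrA (_ : 1 + 1 = 2 :> int) //; split=> [[uv0 uv1]|[uv1 uv2]].
- by rewrite ru rv uv0 uv1.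
- by split=> //; apply: (addrI (u (k + 1))); rewrite -ru uv2 rv uv1.
Qed.

Section GibonacciRing.
Context {R : nzRingType}.

Lemma gib_neg (a b : R) (n : nat) :
  gib a b (- n%:Z) = (gib_bwd a b n).1 /\ gib a b (- n%:Z + 1) = (gib_bwd a b n).2.
Proof.
elim: n => [|n [IH1 IH2]]; first by [].
by rewrite (_ : - n.+1%:Z + 1 = - n%:Z) ?IH1; last lia.
Qed.

Lemma gib_rec (a b : R) : fib_recurrence (gib a b).
Proof.
case=> n.
  have -> : Posz n + 2 = n.+2 by lia.
  have -> : Posz n + 1 = n.+1 by lia.
  by rewrite /gib /= addrC.
have [Gn0 Gn1] := gib_neg a b n; have [Gn _] := gib_neg a b n.+1.
have -> : Negz n + 2 = - n%:Z + 1 by lia.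
have -> : Negz n + 1 = - n%:Z by lia.
by rewrite Gn0 Gn1 NegzE Gn /= subrKC.
Qed.

Lemma gib_add (a b : R) (k m : int) :
  gib a b (k + m) = fib m * gib a b (k + 1) + fib (m - 1) * gib a b k.
Proof.
pose u j := gib a b (k + j).
pose v j : R := fib j * gib a b (k + 1) + fib (j - 1) * gib a b k.
apply: (@fib_recurrence_eq _ u v) => [j|j||].
- by rewrite /u (addrA k j 2) (addrA k j 1) gib_rec.
- rewrite /v /fib.
  have -> : j + 2 - 1 = (j - 1) + 2 by lia.
  have -> : j + 1 - 1 = (j - 1) + 1 by lia.
  by rewrite !gib_rec subrK !mulrDl addrACA.
- by rewrite /u /v addr0 /fib /= mul0r add0r subr0 mul1r.
- by rewrite /u /v subrr /fib /= mul1r mul0r addr0.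
Qed.

End GibonacciRing.

Section GibonacciComRing.
Context {R : comNzRingType}.

Definition gib_cassini (a b : R) (k : int) : R :=
  gib a b (k + 1) ^+ 2 - gib a b k * gib a b (k + 2).

Lemma gib_cassiniS (a b : R) k : gib_cassini a b (k + 1) = - gib_cassini a b k.
Proof.
have k2 : k + 1 + 1 = k + 2 by rewrite -addrA.
by rewrite /gib_cassini (gib_rec a b (k + 1)) k2 gib_rec; ring.
Qed.

Lemma gib_cassini_sqr (a b : R) k : gib_cassini a b k ^+ 2 = gib_cassini a b 0 ^+ 2.
Proof. by elim/int_shift_ind: k => [//|k]; rewrite gib_cassiniS sqrrN. Qed.

Lemma gib_product5 (a b : R) k m :
  5 * gib a b (k - 1) * gib a b k * gib a b (k + 1) * gib a b (k + 2) * gib a b (k + m)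
  = fib (m + 2) * (gib a b (k + 1) ^+ 5 - gib_cassini a b 0 ^+ 2 * gib a b (k + 1))
  + fib (m - 3) * (gib a b k ^+ 5 - gib_cassini a b 0 ^+ 2 * gib a b k).
Proof.
rewrite -(gib_cassini_sqr a b k) /gib_cassini.
rewrite (gib_add a b k (-1)) (gib_add a b k 2) (gib_add a b k m).
have -> : m + 2 = (m - 1) + 3 by lia.
have -> : m - 3 = (m - 1) - 2 by lia.
rewrite /fib (gib_add 0 1 (m - 1) 3) (gib_add 0 1 (m - 1) (-2)) subrK /=.
move: (gib a b k) (gib a b (k + 1)) (gib 0 1 m) (gib 0 1 (m - 1)) => x y p q.
ring.
Qed.

Lemma telescope_weighted_sumr (A C : R) (f : nat -> R) n :
  \sum_(1 <= j < n.+1) (- C) ^+ (n - j) * A ^+ j * (A * f j.+1 + C * f j)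
  = A ^+ n.+1 * f n.+1 - (- C) ^+ n * A * f 1%N.
Proof.
rewrite (@telescope_sumr_eq _ _ _ (fun j => (- C) ^+ (n.+1 - j) * A ^+ j * f j)) //.
  by rewrite subnn subn1 expr0 mul1r expr1.
move=> j /andP[_ jn]; rewrite ltnS in jn.
rewrite subSS subSn // !exprS; ring.
Qed.

End GibonacciComRing.

Theorem proposition2 (R : numFieldType) (a b : R) (hab : (a, b) != (0, 0))
    (n : nat) (hn : (0 < n)%N) (t m : int) :
  let G := gib a b in
  let F := @fib R in
  let lambda := G 1 ^+ 2 - G 0 * G 2 in
  5 * \sum_(1 <= j < n.+1)
        (- F (m - 3)) ^+ (n - j) * F (m + 2) ^+ j
        * G (j%:Z + t - 1) * G (j%:Z + t) * G (j%:Z + t + 1)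
        * G (j%:Z + t + 2) * G (j%:Z + t + m)
  = F (m + 2) ^+ n.+1 * G (n%:Z + t + 1) ^+ 5
    - (- F (m - 3)) ^+ n * F (m + 2) * G (t + 1) ^+ 5
    - lambda ^+ 2 * (F (m + 2) ^+ n.+1 * G (n%:Z + t + 1)
                     - (- F (m - 3)) ^+ n * F (m + 2) * G (t + 1)).
Proof.
move=> G F lambda.
have lambdaE : lambda = gib_cassini a b 0 by rewrite /gib_cassini !add0r.
pose f (j : nat) := G (j%:Z + t) ^+ 5 - lambda ^+ 2 * G (j%:Z + t).
rewrite mulr_sumr (eq_bigr (fun j : nat =>
  (- F (m - 3)) ^+ (n - j) * F (m + 2) ^+ j * (F (m + 2) * f j.+1 + F (m - 3) * f j))).
  rewrite telescope_weighted_sumr /f [1%:Z + t]addrC (_ : n.+1%:Z + t = n%:Z + t + 1); last by lia.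
  move: (F (m + 2)) (F (m - 3)) (G (n%:Z + t + 1)) (G (t + 1)) => A C y x.
  ring.
move=> j _; rewrite /f (_ : j.+1%:Z + t = j%:Z + t + 1); last by lia.
by rewrite lambdaE -gib_product5 -!mulrA !(mulrCA (5 : R)).
Qed.
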